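(* Let $\Pi_n$ be a PARITY$_n$ program. Suppose $\Pi_n$ contains a rule $x\leftarrow B$ (with $x$ a variable) such that $not\ not\ x\in B$ and $S(B)=\{J\}$ for a single string $J$ which is even. Then the program $\Pi_n'=\Pi_n\setminus\{x\leftarrow B\}$ satisfies $Ans(\Pi_n')=$ PARITY$_n$.
   Context: A rule element is one of $\top$, $\bot$, $x$, $not\ x$, $not\ not\ x$, where $x$ is a variable. A (canonical) rule is $H\leftarrow B$ with $H$ a variable or $\bot$ and $B$ a finite set of rule elements; a canonical program is a finite set of rules. For a set of variables $I$: $I\models\top$; $I\not\models\bot$; $I\models x$ iff $I\models not\ not\ x$ iff $x\in I$; $I\models not\ x$ iff $x\notin I$; $I\models B$ iff $I$ satisfies every element of $B$; $I$ is closed under $H\leftarrow B$ if $I\models B$ implies $I\models H$. The reduct $\Pi^I$ replaces $not\ not\ x$ by $\top$ if $x\in I$ else $\bot$, and $not\ x$ by $\top$ if $x\notin I$ else $\bot$; $I$ is an answer set of $\Pi$ if $I$ is the least set closed under all rules of $\Pi^I$; $Ans(\Pi)$ is the set of answer sets; $var(\Pi)$ is the set of variables occurring in $\Pi$. Strings $w\in\{0,1\}^n$ are identified with $\{x_i:w_i=1\}$; PARITY$_n$ is the set of strings in $\{0,1\}^n$ with an odd number of 1's (odd strings; the others are even); a PARITY$_n$ program is a canonical program $\Pi$ with $var(\Pi)=\{x_1,\dots,x_n\}$ and $Ans(\Pi)=$ PARITY$_n$. For a set $B$ of rule elements, $S(B)=\{I\subseteq\{x_1,\dots,x_n\}: I\models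 B\}$. *)

(* Variables x_i are represented by natural numbers i;
   the string variables are x_1, ..., x_n, i.e. the naturals 1..n. *)
From Stdlib Require Import List Arith Bool.
Import ListNotations.

Inductive elem : Type :=
  | ETop : elem
  | EBot : elem
  | EPos : nat -> elem
  | ENeg : nat -> elem
  | ENNeg : nat -> elem.

(* head: Some x is the variable x, None is bottom *)
Record rule : Type := mkRule { head : option nat ; body : list elem }.

Definition program := list rule.

Definition interp := nat -> bool.

Definition sat_elem (I : interp) (e : elem) : Prop :=
  match e with
  | ETop => True
  | EBot => False
  | EPos x => I x = true
  | ENeg x => I x = false
  | ENNeg x => I x = true
  end.

Definition sat_body (I : interp) (B : list elem) : Prop :=
  forall e, In e B -> sat_elem I e.

Definition sat_head (I : interp) (h : option nat) : Prop :=
  match h with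
  | Some x => I x = true
  | None => False
  end.

Definition closed_under (I : interp) (r : rule) : Prop :=
  sat_body I (body r) -> sat_head I (head r).

Definition reduct_elem (I : interp) (e : elem) : elem :=
  match e with
  | ENNeg x => if I x then ETop else EBot
  | ENeg x => if I x then EBot else ETop
  | _ => e
  end.

Definition reduct_rule (I : interp) (r : rule) : rule :=
  mkRule (head r) (map (reduct_elem I) (body r)).

Definition reduct (P : program) (I : interp) : program :=
  map (reduct_rule I) P.

Definition closed_prog (J : interp) (P : program) : Prop :=
  forall r, In r P -> closed_under J r.

Definition subset (I J : interp) : Prop := forall x, I x = true -> J x = true.

Definition answer_set (P : program) (I : interp) : Prop :=
  closed_prog I (reduct P I) /\
  (forall J, closed_prog J (reduct P I) -> subset I J).

Definition elem_var (e : elem) : option nat :=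
  match e with
  | EPos x | ENeg x | ENNeg x => Some x
  | _ => None
  end.

Definition occurs (x : nat) (P : program) : Prop :=
  exists r, In r P /\ (head r = Some x \/ exists e, In e (body r) /\ elem_var e = Some x).

(* strings in {0,1}^n = subsets of {x_1,...,x_n} *)
Definition is_string (n : nat) (I : interp) : Prop :=
  forall x, I x = true -> 1 <= x <= n.

Definition num_ones (n : nat) (I : interp) : nat := count_occ Bool.bool_dec (map I (seq 1 n)) true.

Definition in_PARITY (n : nat) (I : interp) : Prop :=
  is_string n I /\ Nat.odd (num_ones n I) = true.

Definition even_string (n : nat) (I : interp) : Prop :=
  is_string n I /\ Nat.even (num_ones n I) = true.

Definition Ans_is_PARITY (n : nat) (P : program) : Prop :=
  forall I, answer_set P I <-> in_PARITY n I.

Definition parity_program (n : nat) (P : program) : Prop :=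
  (forall x, occurs x P <-> 1 <= x <= n) /\ Ans_is_PARITY n P.

Definition in_S (n : nat) (B : list elem) (I : interp) : Prop :=
  is_string n I /\ sat_body I B.

Definition elem_eq_dec (a b : elem) : {a = b} + {a <> b}.
Proof. decide equality; apply Nat.eq_dec. Defined.

Definition rule_eq_dec (a b : rule) : {a = b} + {a <> b}.
Proof.
  decide equality.
  - apply (list_eq_dec elem_eq_dec).
  - decide equality; apply Nat.eq_dec.
Defined.

Definition remove_rule (r : rule) (P : program) : program :=
  remove rule_eq_dec r P.

(* An answer set of P \ {r} is still one of P, because it is automatically
   closed under the reduct of r: the element [not not x] of B reduces to bottom
   unless x is already in the interpretation.  Conversely, an answer set I of P
   is odd, so it violates B (the only string satisfying B is even); hence no
   subset of I fires the reduct of r, and I stays minimal once r is dropped,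
   as one sees by intersecting a candidate model with I. *)
From Pilot Require Import Defs.
From Stdlib Require Import List Arith Bool.

Definition meet (K L : interp) : interp := fun y => K y && L y.

Lemma subset_meet_l K L : subset (meet K L) K.
Proof. intros y Hy. apply andb_prop in Hy. tauto. Qed.

Lemma subset_meet_r K L : subset (meet K L) L.
Proof. intros y Hy. apply andb_prop in Hy. tauto. Qed.

Lemma sat_body_map (K : interp) (f : elem -> elem) (B : list elem) :
  sat_body K (map f B) <-> forall e, In e B -> sat_elem K (f e).
Proof.
  unfold sat_body; split.
  - intros H e He. apply H, in_map; assumption.
  - intros H e' He'. apply in_map_iff in He' as [e [<- He]]. auto.
Qed.

(* The reduct of a body is negation-free, hence monotone in the interpretation. *)
Lemma sat_reduct_body_mono I K L B :
  subset K L ->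
  sat_body K (map (reduct_elem I) B) -> sat_body L (map (reduct_elem I) B).
Proof.
  intros HKL HK. apply sat_body_map. intros e He.
  apply (proj1 (sat_body_map _ _ _) HK) in He.
  destruct e; simpl in *; auto; destruct (I n); simpl in *; auto.
Qed.

Lemma sat_reduct_body_sound I K B :
  subset K I -> sat_body K (map (reduct_elem I) B) -> sat_body I B.
Proof.
  intros HKI HK e He.
  apply (proj1 (sat_body_map _ _ _) HK) in He.
  destruct e; simpl in *; auto; destruct (I n) eqn:E; simpl in *; auto; contradiction.
Qed.

Lemma closed_under_reduct_meet I K L r :
  closed_under K (reduct_rule I r) -> closed_under L (reduct_rule I r) ->
  closed_under (meet K L) (reduct_rule I r).
Proof.
  unfold closed_under; simpl. intros HK HL Hb.
  specialize (HK (sat_reduct_body_mono I _ _ _ (subset_meet_l K L) Hb)).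
  specialize (HL (sat_reduct_body_mono I _ _ _ (subset_meet_r K L) Hb)).
  destruct (Defs.head r); simpl in *; [unfold meet; rewrite HK, HL|]; auto.
Qed.

Lemma closed_under_reduct_nnot I x B :
  In (ENNeg x) B -> closed_under I (reduct_rule I (mkRule (Some x) B)).
Proof.
  unfold closed_under; simpl. intros Hx Hb.
  apply (proj1 (sat_body_map _ _ _) Hb) in Hx; simpl in Hx.
  destruct (I x); [reflexivity | contradiction].
Qed.

Lemma closed_prog_reduct_remove J I r P :
  closed_prog J (reduct P I) -> closed_prog J (reduct (remove_rule r P) I).
Proof.
  intros H r' Hr'. apply in_map_iff in Hr' as [r0 [<- Hr0]].
  apply H, in_map, (in_remove _ _ _ _ Hr0).
Qed.

Lemma closed_prog_reduct_of_remove J I r P :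
  closed_prog J (reduct (remove_rule r P) I) -> closed_under J (reduct_rule I r) ->
  closed_prog J (reduct P I).
Proof.
  intros H Hr r' Hr'. apply in_map_iff in Hr' as [r0 [<- Hr0]].
  destruct (rule_eq_dec r0 r) as [->|Hne]; [assumption|].
  apply H, in_map, in_in_remove; assumption.
Qed.

Lemma answer_set_of_remove_rule P r I :
  answer_set (remove_rule r P) I -> closed_under I (reduct_rule I r) ->
  answer_set P I.
Proof.
  intros [Hc Hmin] Hr. split.
  - apply (closed_prog_reduct_of_remove _ _ r); assumption.
  - intros J HJ. apply Hmin, closed_prog_reduct_remove, HJ.
Qed.

Lemma answer_set_remove_rule P r I :
  answer_set P I -> ~ sat_body I (body r) -> answer_set (remove_rule r P) I.
Proof.
  intros [Hc Hmin] HrI. split; [apply closed_prog_reduct_remove, Hc|].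
  intros J HJ.
  assert (HIJ : subset I (meet J I)).
  { apply Hmin. intros r' Hr'. apply in_map_iff in Hr' as [r0 [<- Hr0]].
    destruct (rule_eq_dec r0 r) as [->|Hne].
    - intros Hb. exfalso. apply HrI.
      apply (sat_reduct_body_sound I (meet J I)); [apply subset_meet_r | exact Hb].
    - apply closed_under_reduct_meet.
      + apply HJ, in_map, in_in_remove; assumption.
      + apply Hc, in_map, Hr0. }
  intros y Hy. apply (subset_meet_l J I), HIJ, Hy.
Qed.

Lemma num_ones_ext n I J : (forall y, I y = J y) -> num_ones n I = num_ones n J.
Proof. intros H. unfold num_ones. rewrite (map_ext I J); auto. Qed.

Lemma odd_string_not_sat_body n B J I :
  even_string n J -> (forall K, in_S n B K <-> (forall y, K y = J y)) ->
  in_PARITY n I -> ~ sat_body I B.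
Proof.
  intros [_ HJe] HS [HIs HIo] HIB.
  rewrite (num_ones_ext n I J (proj1 (HS I) (conj HIs HIB))) in HIo.
  rewrite <- Nat.negb_even, HJe in HIo. discriminate.
Qed.

Theorem mainTheorem10 (n : nat) (P : program) (x : nat) (B : list elem) :
  parity_program n P ->
  In (mkRule (Some x) B) P ->
  In (ENNeg x) B ->
  (exists J : interp, even_string n J /\
     (forall K : interp, in_S n B K <-> (forall y, K y = J y))) ->
  Ans_is_PARITY n (remove_rule (mkRule (Some x) B) P).
Proof.
  intros [_ HP] _ Hx [J [HJ HS]] I. split.
  - intros HA. apply HP, (answer_set_of_remove_rule _ _ _ HA).
    apply closed_under_reduct_nnot, Hx.
  - intros HI. apply answer_set_remove_rule; [apply HP, HI|].
    exact (odd_string_not_sat_body n B J I HJ HS HI).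
Qed.
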